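(* Consider the $N$-layer cascade of the context, let $1\le m<n\le N$ and $1\le l\le L_m-1$. Then the monomials \[\mathcal{M}_{n,s_{m,l}}=s_{m,l}\,f_m\,s_{m,L_m}\prod_{i=m+1}^n s_{i,L_i-1},\qquad \mathcal{M}_{n,v_{m,l}}=v_{m,l}\,s_{m,L_m}\prod_{i=m+1}^n s_{i,L_i-1}\] appear in $s_{n,L_n}^{(2(n-m+1))}$ and in no derivative $s_{n,L_n}^{(\ell)}$ with $1\le\ell<2(n-m+1)$; their coefficients in $s_{n,L_n}^{(2(n-m+1))}$ are, up to sign, \[\tilde a_{m,l}\,\tilde a_{m,L_m}\prod_{i=m+1}^n c_{i,L_i}a_{i,L_i}\qquad\text{and}\qquad \tilde K_{m,l}\,\tilde a_{m,L_m}\prod_{i=m+1}^n c_{i,L_i}a_{i,L_i},\] respectively, where $\tilde K_{m,l}=\tilde b_{m,l}+\tilde c_{m,l}$.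
   Context: Species are capital letters, concentrations lower-case letters. Mass-action system: $\dot{\mathbf{x}}=\sum_{y\to y'}k_{yy'}\mathbf{x}^y(y'-y)$. Total derivative: $\dot\varphi=\sum_i\frac{\partial\varphi}{\partial x_i}\dot x_i$ with $\dot x_i$ replaced by the right-hand side; $\varphi^{(\ell)}$ the $\ell$-th iterate, a polynomial in concentrations with coefficients polynomial in the rate constants; a monomial appears if its coefficient is nonzero. Cascade: $N\ge1$, $L_1,\dots,L_N\ge1$. Non-intermediate species $E$, pairwise distinct $F_1,\dots,F_N$, and $S_{m,j}$ ($1\le m\le N$, $0\le j\le L_m$), all distinct; intermediates $U_{m,j},V_{m,j}$ ($1\le j\le L_m$), all distinct. $S_{0,L_0}:=E$. For each $m$, $1\le j\le L_m$: $S_{m-1,L_{m-1}}+S_{m,j-1}\to U_{m,j}$ (rate $a_{m,j}$), $U_{m,j}\to S_{m-1,L_{m-1}}+S_{m,j-1}$ ($b_{m,j}$), $U_{m,j}\to S_{m-1,L_{m-1}}+S_{m,j}$ ($c_{m,j}$), $F_m+S_{m,j}\to V_{m,j}$ ($\tilde a_{m,j}$), $V_{m,j}\to F_m+S_{m,j}$ ($\tilde b_{m,j}$), $V_{m,j}\to F_m+S_{m,j-1}$ ($\tilde c_{m,j}$). *)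

(* Formal polynomials in concentrations AND rate constants,
   with integer coefficients, represented as lists of terms. *)
From HB Require Import structures.
From mathcomp Require Import all_boot all_order all_algebra.
Set Implicit Arguments. Unset Strict Implicit. Unset Printing Implicit Defensive.
Import Order.TTheory GRing.Theory Num.Theory.
Local Open Scope ring_scope.

(* Formal variables: (kind, m, j).  Kinds:
   0 = E, 1 = F_m, 2 = S_{m,j}, 3 = U_{m,j}, 4 = V_{m,j}   (concentrations)
   5 = a_{m,j}, 6 = b_{m,j}, 7 = c_{m,j},
   8 = ~a_{m,j}, 9 = ~b_{m,j}, 10 = ~c_{m,j}                (rate constants) *)
Definition var := (nat * nat * nat)%type.

Definition spE : var := (0, 0, 0)%N.
Definition spF (m : nat) : var := (1, m, 0)%N.
Definition spS (m j : nat) : var := (2, m, j)%N.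
Definition spU (m j : nat) : var := (3, m, j)%N.
Definition spV (m j : nat) : var := (4, m, j)%N.
Definition ka (m j : nat) : var := (5, m, j)%N.
Definition kb (m j : nat) : var := (6, m, j)%N.
Definition kc (m j : nat) : var := (7, m, j)%N.
Definition kat (m j : nat) : var := (8, m, j)%N.
Definition kbt (m j : nat) : var := (9, m, j)%N.
Definition kct (m j : nat) : var := (10, m, j)%N.

Definition is_rate (x : var) : bool := (5 <= x.1.1)%N.

(* A polynomial: list of terms (c, vs) meaning c * prod_{v in vs} v. *)
Definition poly := seq (int * seq var).

Definition coef (p : poly) (mon : seq var) : int :=
  \sum_(t <- p | perm_eq t.2 mon) t.1.

Record reaction := Reaction { rrate : var; rreac : seq var; rprod : seq var }.

Definition catalyst (L : nat -> nat) (m : nat) : var :=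
  if m == 1%N then spE else spS m.-1 (L m.-1).

Definition reactions_mj (L : nat -> nat) (m j : nat) : seq reaction :=
  let K := catalyst L m in
  [:: Reaction (ka m j) [:: K; spS m j.-1] [:: spU m j];
      Reaction (kb m j) [:: spU m j] [:: K; spS m j.-1];
      Reaction (kc m j) [:: spU m j] [:: K; spS m j];
      Reaction (kat m j) [:: spF m; spS m j] [:: spV m j];
      Reaction (kbt m j) [:: spV m j] [:: spF m; spS m j];
      Reaction (kct m j) [:: spV m j] [:: spF m; spS m j.-1]].

Definition reactions (N : nat) (L : nat -> nat) : seq reaction :=
  flatten [seq flatten [seq reactions_mj L m j | j <- iota 1 (L m)]
          | m <- iota 1 N].

(* Mass-action right-hand side of d x / dt:  sum_r k_r x^{y_r} (y'_r - y_r)_x *)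
Definition rhs (N : nat) (L : nat -> nat) (x : var) : poly :=
  [seq (((count_mem x (rprod r))%:Z - (count_mem x (rreac r))%:Z),
        rrate r :: rreac r) | r <- reactions N L].

(* product rule: d/dt (prod pre * prod vs) contributions from the factors vs *)
Fixpoint dmon (f : var -> poly) (pre vs : seq var) : poly :=
  match vs with
  | [::] => [::]
  | v :: vs' => [seq (t.1, pre ++ vs' ++ t.2) | t <- f v] ++ dmon f (rcons pre v) vs'
  end.

(* total derivative (rate constants have zero derivative: rhs of a rate
   variable is a list of zero-coefficient terms) *)
Definition tderiv (N : nat) (L : nat -> nat) (p : poly) : poly :=
  flatten [seq [seq (t.1 * u.1, u.2) | u <- dmon (rhs N L) [::] t.2] | t <- p].

Definition nderiv (N : nat) (L : nat -> nat) (l : nat) (x : var) : poly :=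
  iter l (tderiv N L) [:: (1, [:: x])].

(* The coefficient of concentration-monomial M in p (a polynomial in the
   rate constants) is zero. *)
Definition conc_coef_zero (p : poly) (M : seq var) : Prop :=
  forall R : seq var, all is_rate R -> coef p (M ++ R) = 0.

(* The coefficient of concentration-monomial M in p equals the polynomial
   in rate constants C (given as a list of rate monomials, each coefficient 1). *)
Definition conc_coef_eq (p : poly) (M : seq var) (sgn : int) (C : seq (seq var)) : Prop :=
  forall R : seq var, all is_rate R ->
    coef p (M ++ R) = sgn * (\sum_(c <- C) (perm_eq c R)%:R).

From Pilot Require Import Defs.
From HB Require Import structures.
From mathcomp Require Import all_boot all_order all_algebra.
From mathcomp Require Import zify ring.
Import Order.TTheory GRing.Theory Num.Theory.
Local Open Scope ring_scope.
Set Implicit Arguments. Unset Strict Implicit. Unset Printing Implicit Defensive.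

(* A monomial is a sequence of variables; differentiating it replaces one species v by
   the rate constant and the reactants of a reaction moving v.  Dually, the coefficient
   of a monomial M in the l-th derivative is the l-fold transpose [dual_deriv] applied to
   the indicator of M (lemma [coef_nderiv]).

   The proof rests on a weight on species, rate constants weighing 0, for which every such
   replacement raises the total weight by at most one.  S_{n,L_n} weighs 2(m-n) and both
   target monomials weigh 2, so they cannot occur before order 2(n-m+1).  At that order
   every step must raise the weight by exactly one, and these steps are unique along
     S_{i,L_i} -c_{i,L_i}-> U_{i,L_i} -a_{i,L_i}-> S_{i-1,L_{i-1}} S_{i,L_i-1}   (m < i <= n),
     S_{m,L_m} -~a_{m,L_m}-> F_m S_{m,L_m},
   the species S_{i,L_i-1} left behind admitting no raising step.  The last step, out of F_m,
   is dictated by the target: F_m + S_{m,l} -> V_{m,l} if it contains s_{m,l}, and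
   V_{m,l} -> F_m + S_{m,l} or F_m + S_{m,l-1} if it contains v_{m,l}. *)

Definition net (v : var) (r : reaction) : int :=
  (count_mem v (rprod r))%:Z - (count_mem v (rreac r))%:Z.

Definition pairing (p : Defs.poly) (g : seq var -> int) : int := \sum_(t <- p) t.1 * g t.2.

Definition perm_invariant (g : seq var -> int) := forall a b, perm_eq a b -> g a = g b.

Definition indicator (M : seq var) (y : seq var) : int := (perm_eq y M)%:R.

Definition dual_deriv N L (g : seq var -> int) (vs : seq var) : int :=
  \sum_(v <- vs) \sum_(r <- reactions N L) net v r * g (rem v vs ++ rrate r :: rreac r).

Lemma perm_rem (T : eqType) (x : T) s t : perm_eq s t -> perm_eq (rem x s) (rem x t).
Proof.
move=> pst; apply/permP => P; rewrite !count_rem (perm_mem pst).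
by rewrite (permP pst P).
Qed.

Lemma indicator_cat2l (P C R res : seq var) :
  perm_eq res (P ++ C) -> indicator (P ++ R) res = (perm_eq C R)%:R.
Proof. by move=> H; rewrite /indicator (permPl H) perm_cat2l. Qed.

Lemma perm_invariant_indicator M : perm_invariant (indicator M).
Proof. by move=> a b pab; rewrite /indicator (permPl pab). Qed.

Lemma perm_invariant_dual_deriv N L g :
  perm_invariant g -> perm_invariant (dual_deriv N L g).
Proof.
move=> Hg a b pab; rewrite /dual_deriv (perm_big _ pab); apply: eq_bigr => v _.
apply: eq_bigr => r _; congr (_ * _); apply: Hg.
by rewrite perm_cat2r perm_rem.
Qed.

Lemma perm_invariant_iter N L k g :
  perm_invariant g -> perm_invariant (iter k (dual_deriv N L) g).
Proof. by move=> Hg; elim: k => //= k; apply: perm_invariant_dual_deriv. Qed.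

Lemma pairing_dmon (f : var -> Defs.poly) g pre vs : perm_invariant g ->
  pairing (dmon f pre vs) g =
  \sum_(v <- vs) pairing (f v) (fun s => g (pre ++ rem v vs ++ s)).
Proof.
rewrite /pairing => Hg; elim: vs pre => [|v vs IH] pre /=; first by rewrite !big_nil.
rewrite big_cat big_map big_cons IH /= eqxx; congr (_ + _).
apply: eq_big_seq => v' Hv'; apply: eq_bigr => s _; congr (_ * _); apply: Hg.
rewrite -cats1 -!catA perm_cat2l /=; case: eqVneq Hv' => [<- Hv|] //.
by rewrite -cat_cons perm_cat2r perm_sym perm_to_rem.
Qed.

Lemma pairing_tderiv N L p g : perm_invariant g ->
  pairing (tderiv N L p) g = pairing p (dual_deriv N L g).
Proof.
move=> Hg; rewrite /pairing /tderiv big_flatten big_map; apply: eq_bigr => t _.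
rewrite big_map /=.
transitivity (t.1 * pairing (dmon (rhs N L) [::] t.2) g).
  by rewrite /pairing big_distrr; apply: eq_bigr => u _; rewrite /= mulrA.
rewrite (pairing_dmon _ _ _ Hg); congr (_ * _); apply: eq_bigr => v _; by rewrite /pairing big_map.
Qed.

Lemma pairing_nderiv N L k p g : perm_invariant g ->
  pairing (iter k (tderiv N L) p) g = pairing p (iter k (dual_deriv N L) g).
Proof.
elim: k g => //= k IH g Hg.
by rewrite pairing_tderiv // IH -?iterSr //; apply: perm_invariant_dual_deriv.
Qed.

Lemma coef_pairing p M : coef p M = pairing p (indicator M).
Proof.
rewrite /coef /pairing big_mkcond; apply: eq_bigr => t _.
by rewrite /indicator; case: perm_eq; rewrite ?mulr1 ?mulr0.
Qed.

Lemma coef_nderiv N L k x M :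
  coef (nderiv N L k x) M = iter k (dual_deriv N L) (indicator M) [:: x].
Proof.
rewrite coef_pairing pairing_nderiv; last exact: perm_invariant_indicator.
by rewrite /pairing big_seq1 mul1r.
Qed.

Definition reaction_triple (r : reaction) := (rrate r, rreac r, rprod r).
Definition triple_reaction (x : var * seq var * seq var) := Reaction x.1.1 x.1.2 x.2.
Lemma reaction_tripleK : cancel reaction_triple triple_reaction. Proof. by case. Qed.
HB.instance Definition _ := Equality.copy reaction (can_type reaction_tripleK).

Lemma InP (T : eqType) (x : T) s : reflect (List.In x s) (x \in s).
Proof.
elim: s => [|y s IH] /=; first by constructor.
by rewrite inE; apply: (iffP orP) => [[/eqP ->|/IH]|[->|/IH]]; auto.
Qed.

Lemma mem_reactions N L r : r \in reactions N L ->
  exists i j, [/\ (1 <= i <= N)%N, (1 <= j <= L i)%N & r \in reactions_mj L i j].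
Proof.
case/flatten_mapP => i; rewrite mem_iota => Hi /flatten_mapP [j].
by rewrite mem_iota => Hj Hr; exists i, j; split => //; lia.
Qed.

Lemma reactions_mj_sub N L i j : (1 <= i <= N)%N -> (1 <= j <= L i)%N ->
  {subset reactions_mj L i j <= reactions N L}.
Proof.
move=> Hi Hj r Hr; apply/flatten_mapP; exists i; first by rewrite mem_iota; lia.
by apply/flatten_mapP; exists j; first by rewrite mem_iota; lia.
Qed.

Lemma rrate_reactions N L r : r \in reactions N L ->
  [/\ (5 <= (rrate r).1.1 <= 10)%N, (1 <= (rrate r).1.2 <= N)%N &
      (1 <= (rrate r).2 <= L (rrate r).1.2)%N].
Proof.
case/mem_reactions => i [j [Hi Hj /InP]].
by rewrite /reactions_mj /=; case=> [<-|[<-|[<-|[<-|[<-|[<-|[]]]]]]].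
Qed.

Lemma rrate_inj N L r r' : r \in reactions N L -> r' \in reactions N L ->
  rrate r = rrate r' -> r = r'.
Proof.
move=> /mem_reactions [i [j [_ _ /InP Hr]]] /mem_reactions [i' [j' [_ _ /InP Hr']]].
move: Hr Hr'; rewrite /reactions_mj /=.
by case=> [<-|[<-|[<-|[<-|[<-|[<-|[]]]]]]]; case=> [<-|[<-|[<-|[<-|[<-|[<-|[]]]]]]];
  move=> /= [] *; subst.
Qed.

Lemma net_mem v r : net v r != 0 -> v \in rreac r ++ rprod r.
Proof.
apply: contraR; rewrite mem_cat negb_or => /andP[h1 h2].
by rewrite /net !(count_memPn _) ?subrr.
Qed.

Lemma net_rate N L v r : (5 <= v.1.1)%N -> r \in reactions N L -> net v r = 0.
Proof.
move=> Hv /mem_reactions [i [j [_ _ /InP]]].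
have ne (x : var) : (x.1.1 <= 4)%N -> (x == v) = false.
  by move=> Hx; apply/eqP => E; subst; lia.
rewrite /reactions_mj /catalyst /=; case: ifP => _;
by case=> [<-|[<-|[<-|[<-|[<-|[<-|[]]]]]]]; rewrite /net /= !ne.
Qed.

Lemma count_rates (x : var) Rs : all is_rate Rs -> (x.1.1 <= 4)%N -> count_mem x Rs = 0%N.
Proof.
move=> /allP HR Hx; apply/count_memPn/negP => /HR; rewrite /is_rate; lia.
Qed.

Lemma count_rrate N L k : (5 <= k.1.1 <= 10)%N -> (1 <= k.1.2 <= N)%N ->
  (1 <= k.2 <= L k.1.2)%N -> count (fun r => rrate r == k) (reactions N L) = 1%N.
Proof.
case: k => [[t i0] j0] /= Ht Hi0 Hj0.
have count_mj i j : count (fun r => rrate r == (t, i0, j0)) (reactions_mj L i j) =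
    ((i == i0) && (j == j0))%N.
  rewrite /reactions_mj /= /ka /kb /kc /kat /kbt /kct !xpair_eqE.
  case: (i == i0); case: (j == j0); rewrite /= ?andbF ?andbT //=;
  case: t Ht => [|[|[|[|[|[|[|[|[|[|[|t]]]]]]]]]]] //.
have count_m i : count (fun r => rrate r == (t, i0, j0))
    (flatten [seq reactions_mj L i j | j <- iota 1 (L i)]) = ((i == i0) && (j0 \in iota 1 (L i)))%N.
  rewrite count_flatten -map_comp (eq_map (fun j => count_mj i j)) sumn_count.
  case: (i == i0); last by rewrite count_pred0.
  exact: count_uniq_mem (iota_uniq _ _).
rewrite /reactions count_flatten -map_comp (eq_map count_m) sumn_count.
rewrite (eq_count (a2 := pred1 i0)) => [|i]; last first.
  case: eqVneq => [->|/negbTE] /=; last by move=> ->.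
  by rewrite eqxx; apply/idP; rewrite mem_iota; lia.
by rewrite count_uniq_mem ?iota_uniq // mem_iota; lia.
Qed.

Lemma big_rrate1 N L (F : reaction -> int) r0 : r0 \in reactions N L ->
  \sum_(r <- reactions N L | rrate r \in [:: rrate r0]) F r = F r0.
Proof.
move=> Hr0; transitivity (\sum_(r <- reactions N L | rrate r \in [:: rrate r0]) F r0).
  rewrite big_seq_cond [RHS]big_seq_cond; apply: eq_bigr => r /andP[Hr].
  by rewrite inE => /eqP Er; rewrite (rrate_inj Hr Hr0 Er).
have [Ht Hi Hj] := rrate_reactions Hr0.
rewrite big_const_seq (eq_count (a2 := fun r => rrate r == rrate r0)) => [|r]; last by rewrite inE.
by rewrite count_rrate //= addr0.
Qed.

Lemma big_rrate2 N L (F : reaction -> int) r1 r2 :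
  r1 \in reactions N L -> r2 \in reactions N L -> rrate r1 != rrate r2 ->
  \sum_(r <- reactions N L | rrate r \in [:: rrate r1; rrate r2]) F r = F r1 + F r2.
Proof.
move=> Hr1 Hr2 Hne; rewrite (bigID (fun r => rrate r == rrate r1)) /=.
rewrite -(big_rrate1 F Hr1) -(big_rrate1 F Hr2).
congr (_ + _); apply: eq_bigl => r; rewrite !inE.
  by case: (rrate r == rrate r1); case: (rrate r == rrate r2).
case E1: (rrate r == rrate r1); last by rewrite andbT.
by move/eqP: E1 => ->; rewrite (negbTE Hne).
Qed.

Lemma dual_deriv_restrict N L g vs act (K : seq var) :
  count_mem act vs = 1%N ->
  (forall v, v \in vs -> forall r, r \in reactions N L -> net v r != 0 ->
     ~~ ((v == act) && (rrate r \in K)) -> g (rem v vs ++ rrate r :: rreac r) = 0) ->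
  dual_deriv N L g vs =
  \sum_(r <- reactions N L | rrate r \in K) net act r * g (rem act vs ++ rrate r :: rreac r).
Proof.
move=> Hc Hg; set X := (X in _ = X).
transitivity (\sum_(v <- vs) (if v == act then X else 0)).
  apply: eq_big_seq => v Hv; rewrite (bigID (fun r => rrate r \in K)) /=.
  rewrite [X in _ + X]big1_seq ?addr0; last first.
    move=> r /andP[HK Hr]; case: (eqVneq (net v r) 0) => [->|Hn]; first by rewrite mul0r.
    by rewrite Hg ?mulr0 // (negbTE HK) andbF.
  case: (eqVneq v act) => [->|Hva] //.
  apply: big1_seq => r /andP[HK Hr]; case: (eqVneq (net v r) 0) => [->|Hn]; first by rewrite mul0r.
  by rewrite Hg ?mulr0 // (negbTE Hva).
rewrite -big_mkcond big_const_seq /=.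
have -> : count (fun v => v == act) vs = 1%N by rewrite -Hc.
by rewrite /= addr0.
Qed.

Ltac perm_by_counts := apply/permP => ?; rewrite /=; repeat rewrite count_cat /=; lia.

Ltac destruct_bool_hyps := repeat match goal with
 | H : is_true (_ && _) |- _ => case/andP: H => ? ?
 | H : (_ && _) = true |- _ => case/andP: H => ? ?
 | H : is_true (?a == ?b) |- _ => move/eqP: H => H; try subst a; try subst b
 | H : (?a == ?b) = true |- _ => move/eqP: H => H; try subst a; try subst b
 end.

Ltac split_ifs := repeat (match goal with |- context [if ?b then _ else _] =>
  let E := fresh "E" in case E: b end; destruct_bool_hyps).

Section Weight.

Variables (N : nat) (L : nat -> nat) (m n l : nat).
Hypotheses (hL : forall i, (1 <= i <= N)%N -> (1 <= L i)%N)
  (hm : (1 <= m)%N) (hmn : (m < n)%N) (hnN : (n <= N)%N)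
  (hl1 : (1 <= l)%N) (hl2 : (l <= L m - 1)%N).

(* Low enough that no weight-raising step involves a species off the chain. *)
Definition far_weight : int := - ((2 * n)%:Z + (L m)%:Z + l%:Z + 5).

Definition stage_weight (j : nat) (at_l : int) : int :=
  if (j < l)%N then j%:Z - l%:Z + 2 else if j == l then at_l
  else if (j <= L m)%N then j%:Z - (L m)%:Z else far_weight.

Definition weight (x : var) : int :=
  let: (k, i, j) := x in
  let on_chain := (m < i <= n)%N in
  match k with
  | 0%N => far_weight
  | 1%N => if i == m then 1 else far_weight
  | 2%N => if on_chain && (j == L i) then - (2 * (i%:Z - m%:Z))
         else if on_chain && (j.+1 == L i) then 0
         else if i == m then stage_weight j 1 else far_weight
  | 3%N => if on_chain && (j == L i) then 1 - 2 * (i%:Z - m%:Z) else far_weight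
  | 4%N => if i == m then stage_weight j 2 else far_weight
  | _ => 0
  end.

Definition mweight (vs : seq var) : int := \sum_(v <- vs) weight v.

Lemma weight_rate x : (5 <= x.1.1)%N -> weight x = 0.
Proof.
case: x => [[[|[|[|[|[|k]]]]] i] j] //= Hk; lia.
Qed.

Lemma mweight_cat a b : mweight (a ++ b) = mweight a + mweight b.
Proof. exact: big_cat. Qed.

Lemma mweight_cons x a : mweight (x :: a) = weight x + mweight a.
Proof. exact: big_cons. Qed.

Lemma mweight_perm a b : perm_eq a b -> mweight a = mweight b.
Proof. exact: perm_big. Qed.

Lemma mweight_rates Rs : all is_rate Rs -> mweight Rs = 0.
Proof.
by move/allP=> HR; rewrite /mweight big1_seq // => x /andP[_ /HR]; apply: weight_rate.
Qed.

Definition tail_from (a : nat) : seq var :=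
  [seq spS i (L i - 1)%N | i <- iota a.+1 (n - a)%N].

Definition chain_rates (a : nat) : seq var :=
  flatten [seq [:: kc i (L i); ka i (L i)] | i <- iota m.+1 (a - m)%N].

Lemma mem_tail_from a v :
  v \in tail_from a -> exists2 i, (a < i <= n)%N & v = spS i (L i - 1).
Proof. by case/mapP => i; rewrite mem_iota => Hi ->; exists i => //; lia. Qed.

Lemma count_tail_from a (x : var) : (x.1.1 != 2%N) || (x.1.2 <= a)%N ->
  count_mem x (tail_from a) = 0%N.
Proof.
by move=> Hx; apply/count_memPn/negP => /mem_tail_from [i Hi E]; move: Hx; rewrite E /=; lia.
Qed.

Lemma weight_S i : (m < i <= n)%N -> weight (spS i (L i)) = - (2 * (i%:Z - m%:Z)).
Proof. by move=> Hi; rewrite /weight /= eqxx andbT Hi. Qed.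

Lemma weight_U i : (m < i <= n)%N -> weight (spU i (L i)) = 1 - 2 * (i%:Z - m%:Z).
Proof. by move=> Hi; rewrite /weight /= eqxx andbT Hi. Qed.

Lemma weight_tail i : (m < i <= n)%N -> weight (spS i (L i - 1)) = 0.
Proof.
move=> Hi; have HL : (1 <= L i)%N by apply: hL; lia.
rewrite /weight /= Hi /=.
have -> : (L i - 1 == L i)%N = false by apply/eqP; lia.
by have -> : ((L i - 1).+1 == L i)%N = true by apply/eqP; lia.
Qed.

Lemma weight_F : weight (spF m) = 1.
Proof. by rewrite /weight /= eqxx. Qed.

Lemma weight_Sm : weight (spS m (L m)) = 0.
Proof.
rewrite /weight /= ltnn /= eqxx /stage_weight.
have -> : (L m < l)%N = false by lia.
have -> : (L m == l) = false by apply/eqP; lia.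
by rewrite leqnn subrr.
Qed.

Lemma weight_Sl : weight (spS m l) = 1.
Proof. by rewrite /weight /= ltnn /= /stage_weight !eqxx ltnn. Qed.

Lemma weight_Vl : weight (spV m l) = 2.
Proof. by rewrite /weight /= eqxx /stage_weight ltnn eqxx. Qed.

Lemma mweight_tail_from a : (m <= a)%N -> mweight (tail_from a) = 0.
Proof.
move=> Ha; rewrite /mweight big1_seq // => v /andP[_ /mem_tail_from [i Hi ->]].
by apply: weight_tail; lia.
Qed.

Lemma tail_from_pred i : (1 <= i <= n)%N -> tail_from i.-1 = spS i (L i - 1) :: tail_from i.
Proof.
move=> Hi; rewrite /tail_from.
have -> : (n - i.-1 = (n - i).+1)%N by lia.
by rewrite prednK //; lia.
Qed.

Lemma tail_from_n : tail_from n = [::].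
Proof. by rewrite /tail_from subnn. Qed.

Lemma chain_rates_rates a : all is_rate (chain_rates a).
Proof. by rewrite /chain_rates; elim: (iota _ _). Qed.

Lemma chain_ratesS d : chain_rates (m + d.+1) =
  chain_rates (m + d) ++ [:: kc (m + d.+1) (L (m + d.+1)); ka (m + d.+1) (L (m + d.+1))].
Proof.
rewrite /chain_rates.
have -> : (m + d.+1 - m = d + 1)%N by lia.
have -> : (m + d - m = d)%N by lia.
by rewrite iotaD map_cat flatten_cat addSnnS.
Qed.

Ltac reaction_step_cases Hr :=
  let i := fresh "i" in let j := fresh "j" in
  let Hi := fresh "Hi" in let Hj := fresh "Hj" in
  case/mem_reactions: Hr => i [j [Hi Hj /InP Hr]];
  rewrite /reactions_mj /= in Hr; case: Hr => [<-|[<-|[<-|[<-|[<-|[<-|[]]]]]]];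
  rewrite /catalyst /=; try (case: ifP => ?).

Lemma mweight_reactants_le v r : r \in reactions N L -> net v r != 0 ->
  mweight (rreac r) <= weight v + 1.
Proof.
move=> Hr /net_mem; rewrite /mweight; reaction_step_cases Hr;
  rewrite !inE; case/or3P=> /eqP ->; rewrite !big_cons big_nil;
  rewrite /weight /stage_weight /far_weight /=; split_ifs; lia.
Qed.

Lemma mweight_step v vs r : v \in vs -> r \in reactions N L ->
  mweight (rem v vs ++ rrate r :: rreac r) = mweight vs - weight v + mweight (rreac r).
Proof.
move=> Hv Hr; have [Hk _ _] := rrate_reactions Hr.
rewrite mweight_cat mweight_cons weight_rate; last by case/andP: Hk.
by rewrite [mweight vs](mweight_perm (perm_to_rem Hv)) mweight_cons; ring.
Qed.

Definition vanishes_below (c : int) (g : seq var -> int) :=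
  forall y, mweight y < c -> g y = 0.

Lemma vanishes_below_indicator T : vanishes_below (mweight T) (indicator T).
Proof.
move=> y; rewrite /indicator; case: (boolP (perm_eq y T)) => // Hp.
by rewrite (mweight_perm Hp) ltxx.
Qed.

Lemma vanishes_below_dual_deriv c g :
  vanishes_below c g -> vanishes_below (c - 1) (dual_deriv N L g).
Proof.
move=> Hg y Hy; rewrite /dual_deriv big1_seq // => v /andP[_ Hv].
rewrite big1_seq // => r /andP[_ Hr].
have [->|Hn] := eqVneq (net v r) 0; first by rewrite mul0r.
have Hle := mweight_reactants_le Hr Hn.
by rewrite Hg ?mulr0 // mweight_step //; lia.
Qed.

Lemma vanishes_below_iter c g k : vanishes_below c g ->
  vanishes_below (c - k%:Z) (iter k (dual_deriv N L) g).
Proof.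
move=> Hg; elim: k => [|k IH] /=; first by rewrite subr0.
by move=> y Hy; apply: (vanishes_below_dual_deriv IH); lia.
Qed.

Ltac raising_step_cases Hr :=
  let Ev := fresh "Ev" in let Hw := fresh "Hw" in
  move=> /net_mem; rewrite /mweight; reaction_step_cases Hr; rewrite !inE;
  case/or3P => /eqP Ev Hw; case: Ev => *; try discriminate; subst; destruct_bool_hyps;
  move: Hw; rewrite ?big_cons ?big_nil /weight /stage_weight /far_weight /=; split_ifs;
  try (move=> ?; exfalso; lia); done.

Lemma raising_step_S i r : (m < i <= n)%N -> r \in reactions N L ->
  net (spS i (L i)) r != 0 -> mweight (rreac r) = weight (spS i (L i)) + 1 ->
  rrate r = kc i (L i).
Proof. by move=> Hi Hr; raising_step_cases Hr. Qed.

Lemma raising_step_U i r : (m < i <= n)%N -> r \in reactions N L ->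
  net (spU i (L i)) r != 0 -> mweight (rreac r) = weight (spU i (L i)) + 1 ->
  rrate r = ka i (L i).
Proof. by move=> Hi Hr; raising_step_cases Hr. Qed.

Lemma raising_step_Sm r : r \in reactions N L ->
  net (spS m (L m)) r != 0 -> mweight (rreac r) = weight (spS m (L m)) + 1 ->
  rrate r = kat m (L m).
Proof. by move=> Hr; raising_step_cases Hr. Qed.

Lemma no_raising_step_tail i r : (m < i <= n)%N -> r \in reactions N L ->
  net (spS i (L i - 1)) r != 0 -> mweight (rreac r) != weight (spS i (L i - 1)) + 1.
Proof.
move=> Hi Hr Hnet; apply/eqP; have HLi : (1 <= L i)%N by apply: hL; lia.
by move: Hnet; raising_step_cases Hr.
Qed.

Lemma no_raising_step_spectators a v r Rs : (m <= a)%N -> all is_rate Rs ->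
  v \in tail_from a ++ Rs -> r \in reactions N L -> net v r != 0 ->
  mweight (rreac r) != weight v + 1.
Proof.
move=> Ha HR; rewrite mem_cat => /orP[/mem_tail_from [i Hi ->]|Hv] Hr Hn.
  by apply: no_raising_step_tail => //; lia.
by move/allP: HR => /(_ v Hv) Hv5; rewrite (net_rate Hv5 Hr) eqxx in Hn.
Qed.

Lemma reaction_kat_mem :
  Reaction (kat m (L m)) [:: spF m; spS m (L m)] [:: spV m (L m)] \in reactions N L.
Proof.
have HLm : (1 <= L m)%N by apply: hL; lia.
by apply: (@reactions_mj_sub _ _ m (L m)); rewrite ?inE ?eqxx ?orbT //; lia.
Qed.

Lemma dual_deriv_head g a x Rs r0 : (m <= a)%N -> all is_rate Rs ->
  (x.1.1 <= 4)%N -> (x.1.1 != 2%N) || (x.1.2 <= a)%N -> r0 \in reactions N L ->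
  vanishes_below (mweight (x :: tail_from a ++ Rs) + 1) g ->
  (forall r, r \in reactions N L -> net x r != 0 -> mweight (rreac r) = weight x + 1 ->
     rrate r = rrate r0) ->
  dual_deriv N L g (x :: tail_from a ++ Rs) =
  net x r0 * g (tail_from a ++ Rs ++ rrate r0 :: rreac r0).
Proof.
move=> Ha HR Hx4 Hx2 Hr0 Hg Hraise.
have Hc : count_mem x (x :: tail_from a ++ Rs) = 1%N.
  by rewrite /= eqxx count_cat count_tail_from ?count_rates.
rewrite (dual_deriv_restrict (act := x) (K := [:: rrate r0])) //; last first.
  move=> v Hv r Hr Hn Hnot; apply: Hg; rewrite mweight_step //.
  have Hle := mweight_reactants_le Hr Hn.
  have [Hraising|] := eqVneq (mweight (rreac r)) (weight v + 1); last lia.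
  exfalso; move: Hv Hnot; rewrite inE => /orP[/eqP Ev|Hv].
    by rewrite Ev eqxx (Hraise r) -?Ev // inE eqxx.
  by move/eqP: (no_raising_step_spectators Ha HR Hv Hr Hn).
by rewrite big_rrate1 //= eqxx catA.
Qed.

Lemma dual_deriv_S g i Rs : (m < i <= n)%N -> all is_rate Rs -> perm_invariant g ->
  vanishes_below (mweight (spS i (L i) :: tail_from i ++ Rs) + 1) g ->
  dual_deriv N L g (spS i (L i) :: tail_from i ++ Rs) =
  g (spU i (L i) :: tail_from i ++ kc i (L i) :: Rs).
Proof.
move=> Hi HR Hg Hvan; have HLi : (1 <= L i)%N by apply: hL; lia.
set r0 := Reaction (kc i (L i)) [:: spU i (L i)] [:: catalyst L i; spS i (L i)].
have Hr0 : r0 \in reactions N L.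
  by apply: (@reactions_mj_sub _ _ i (L i)); rewrite ?inE ?eqxx ?orbT //; lia.
rewrite (dual_deriv_head _ HR _ _ Hr0 Hvan) //=; last 2 first.
- lia.
- by move=> r; apply: raising_step_S.
have Hcat : (catalyst L i == spS i (L i)) = false.
  by rewrite /catalyst; case: ifP => // _; apply/eqP; case; lia.
rewrite /net /= eqxx Hcat mul1r; apply: Hg.
perm_by_counts.
Qed.

Lemma dual_deriv_U g i Rs : (m < i <= n)%N -> all is_rate Rs -> perm_invariant g ->
  vanishes_below (mweight (spU i (L i) :: tail_from i ++ Rs) + 1) g ->
  dual_deriv N L g (spU i (L i) :: tail_from i ++ Rs) =
  g (spS i.-1 (L i.-1) :: tail_from i.-1 ++ ka i (L i) :: Rs).
Proof.
move=> Hi HR Hg Hvan; have HLi : (1 <= L i)%N by apply: hL; lia.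
set r0 := Reaction (ka i (L i)) [:: catalyst L i; spS i (L i).-1] [:: spU i (L i)].
have Hr0 : r0 \in reactions N L.
  by apply: (@reactions_mj_sub _ _ i (L i)); rewrite ?inE ?eqxx ?orbT //; lia.
rewrite (dual_deriv_head _ HR _ _ Hr0 Hvan) //=; last 2 first.
- lia.
- by move=> r; apply: raising_step_U.
have Hcat : catalyst L i = spS i.-1 (L i.-1) by rewrite /catalyst; case: ifP => // /eqP; lia.
rewrite /net /= eqxx Hcat mul1r tail_from_pred; last by lia.
apply: Hg; rewrite -[(L i).-1]subn1; perm_by_counts.
Qed.

Lemma dual_deriv_Sm g Rs : all is_rate Rs -> perm_invariant g ->
  vanishes_below (mweight (spS m (L m) :: tail_from m ++ Rs) + 1) g ->
  dual_deriv N L g (spS m (L m) :: tail_from m ++ Rs) =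
  - g (spF m :: spS m (L m) :: tail_from m ++ kat m (L m) :: Rs).
Proof.
move=> HR Hg Hvan.
rewrite (dual_deriv_head _ HR _ _ reaction_kat_mem Hvan) //=; last first.
  by move=> r; apply: raising_step_Sm.
rewrite /net /= eqxx mulN1r; congr (- _); apply: Hg.
perm_by_counts.
Qed.

Section Target.

Variable T : seq var.
Hypothesis HT : mweight T = 2.

Let G t := iter t (dual_deriv N L) (indicator T).

Lemma perm_invariant_G t : perm_invariant (G t).
Proof. exact/perm_invariant_iter/perm_invariant_indicator. Qed.

Lemma vanishes_below_G t : vanishes_below (2 - t%:Z) (G t).
Proof. by rewrite -HT; apply/vanishes_below_iter/vanishes_below_indicator. Qed.

Lemma iter_dual_deriv_chain d Rs : (m + d <= n)%N -> all is_rate Rs ->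
  G (2 * d + 2) (spS (m + d) (L (m + d)) :: tail_from (m + d) ++ Rs) =
  G 2 (spS m (L m) :: tail_from m ++ chain_rates (m + d) ++ Rs).
Proof.
elim: d Rs => [|d IH] Rs Hd HR; first by rewrite !addn0 /chain_rates subnn.
have Hi : (m < m + d.+1 <= n)%N by lia.
have Htail : mweight (tail_from (m + d.+1)) = 0 by apply: mweight_tail_from; lia.
have -> : (2 * d.+1 + 2 = (2 * d + 2).+2)%N by lia.
rewrite [LHS]/= dual_deriv_S //; last 2 first.
- exact: perm_invariant_dual_deriv (perm_invariant_G _).
- move=> y Hy; apply: (@vanishes_below_G (2 * d + 2).+1); move: Hy.
  by rewrite mweight_cons mweight_cat Htail (mweight_rates HR) weight_S //; lia.
rewrite dual_deriv_U //=; last 2 first.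
- exact: perm_invariant_G.
- move=> y Hy; apply: vanishes_below_G; move: Hy.
  by rewrite mweight_cons mweight_cat Htail mweight_cons (mweight_rates HR) weight_U //;
    rewrite weight_rate //; lia.
have -> : (m + d.+1).-1 = (m + d)%N by rewrite addnS.
rewrite IH /=; last 2 first.
- lia.
- by rewrite HR.
apply: (@perm_invariant_G 2); rewrite chain_ratesS.
perm_by_counts.
Qed.

Lemma coef_nderiv_below k : (k < 2 * (n - m + 1))%N ->
  coef (nderiv N L k (spS n (L n))) T = 0.
Proof.
move=> Hk; rewrite coef_nderiv; apply: (@vanishes_below_G k).
by rewrite /mweight big_seq1 weight_S; lia.
Qed.

Lemma coef_nderiv_top : coef (nderiv N L (2 * (n - m + 1)) (spS n (L n))) T =
  - dual_deriv N L (indicator T)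
      (spF m :: spS m (L m) :: tail_from m ++ kat m (L m) :: chain_rates n).
Proof.
have Echain := @iter_dual_deriv_chain (n - m) [::].
rewrite subnKC ?tail_from_n ?cats0 in Echain; last exact: ltnW.
have -> : (2 * (n - m + 1) = 2 * (n - m) + 2)%N by lia.
rewrite coef_nderiv -/(G _) Echain // [LHS]/= dual_deriv_Sm ?chain_rates_rates //.
  exact: (@perm_invariant_G 1).
move=> y Hy; apply: (@vanishes_below_G 1); move: Hy.
rewrite mweight_cons mweight_cat mweight_tail_from // (mweight_rates (chain_rates_rates n)).
by rewrite weight_Sm; lia.
Qed.

(* X occurs in T but not in the monomial, so a contributing step takes X as a reactant. *)
Lemma dual_deriv_F X (K : seq var) Rs :
  all is_rate Rs -> (X.1.1 <= 4)%N -> count_mem X T = 1%N ->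
  count_mem X (spF m :: spS m (L m) :: tail_from m ++ Rs) = 0%N ->
  (forall r, r \in reactions N L -> net (spF m) r != 0 -> rrate r \notin K ->
     X \notin rreac r) ->
  dual_deriv N L (indicator T) (spF m :: spS m (L m) :: tail_from m ++ Rs) =
  \sum_(r <- reactions N L | rrate r \in K)
     net (spF m) r * indicator T (spS m (L m) :: tail_from m ++ Rs ++ rrate r :: rreac r).
Proof.
move=> HR HX HcT HcX HK; set vs := spF m :: _.
have Hvs : mweight vs = 1.
  rewrite /vs !mweight_cons mweight_cat mweight_tail_from // (mweight_rates HR).
  by rewrite weight_F weight_Sm; lia.
have HcF : count_mem (spF m) vs = 1%N.
  by rewrite /vs /= eqxx count_cat count_tail_from ?count_rates.
rewrite (dual_deriv_restrict (K := K) HcF).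
  by under eq_bigr do rewrite /vs /= eqxx cat_cons -catA.
move=> v Hv r Hr Hn Hnot; rewrite /indicator; case: (boolP (perm_eq _ T)) => // Hp; exfalso.
have Hraising : mweight (rreac r) = weight v + 1.
  move: (mweight_perm Hp) (mweight_reactants_le Hr Hn).
  by rewrite HT mweight_step // Hvs; lia.
have HXr : X \in rreac r.
  have := permP Hp (pred1 X); rewrite HcT count_cat count_mem_rem HcX /=.
  have [Hk _ _] := rrate_reactions Hr.
  have -> : (rrate r == X) = false.
    by apply/negbTE; apply: contraTneq HX => <-; rewrite -ltnNge; case/andP: Hk.
  by rewrite -has_pred1 has_count /=; lia.
have HXvs : X \notin vs by apply/count_memPn; rewrite HcX.
move: Hv; rewrite /vs inE => /orP[/eqP Ev|].
  rewrite Ev eqxx /= in Hn Hnot.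
  by move: HXr; apply/negP/HK.
rewrite inE => /orP[/eqP Ev|Hv].
  rewrite Ev in Hn Hraising.
  have := rrate_inj Hr reaction_kat_mem (raising_step_Sm Hr Hn Hraising) => Er.
  by move: HXr HXvs; rewrite Er !inE => /orP[] ->; rewrite ?orbT.
by move/eqP: (no_raising_step_spectators (leqnn m) HR Hv Hr Hn).
Qed.

End Target.

Lemma notin_reactants_S_ml r : r \in reactions N L -> net (spF m) r != 0 ->
  rrate r \notin [:: kat m l] -> spS m l \notin rreac r.
Proof. by move=> Hr /net_mem; reaction_step_cases Hr; rewrite !inE /= !xpair_eqE /=; lia. Qed.

Lemma notin_reactants_V_ml r : r \in reactions N L -> net (spF m) r != 0 ->
  rrate r \notin [:: kbt m l; kct m l] -> spV m l \notin rreac r.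
Proof. by move=> Hr /net_mem; reaction_step_cases Hr; rewrite !inE /= !xpair_eqE /=; lia. Qed.

Definition monoS := [:: spS m l; spF m; spS m (L m)] ++ tail_from m.

Definition monoV := [:: spV m l; spS m (L m)] ++ tail_from m.

Lemma mweight_monoS R : all is_rate R -> mweight (monoS ++ R) = 2.
Proof.
move=> HR; rewrite !mweight_cat !mweight_cons mweight_tail_from // (mweight_rates HR).
by rewrite weight_Sl weight_F weight_Sm /mweight big_nil; lia.
Qed.

Lemma mweight_monoV R : all is_rate R -> mweight (monoV ++ R) = 2.
Proof.
move=> HR; rewrite !mweight_cat !mweight_cons mweight_tail_from // (mweight_rates HR).
by rewrite weight_Vl weight_Sm /mweight big_nil; lia.
Qed.

Lemma coef_top_monoS R : all is_rate R ->
  coef (nderiv N L (2 * (n - m + 1)) (spS n (L n))) (monoS ++ R) =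
  (perm_eq (kat m l :: kat m (L m) :: chain_rates n) R)%:R.
Proof.
move=> HR; have HT := mweight_monoS HR.
have HSl : (spS m (L m) == spS m l) = false by apply/eqP; case; lia.
have Hr1 : Reaction (kat m l) [:: spF m; spS m l] [:: spV m l] \in reactions N L.
  by apply: (@reactions_mj_sub _ _ m l); rewrite ?inE ?eqxx ?orbT //; lia.
rewrite (coef_nderiv_top HT) (dual_deriv_F HT (X := spS m l) (K := [:: kat m l]));
  [| exact: chain_rates_rates | by [] | | | exact: notin_reactants_S_ml]; last first.
- by rewrite /= count_cat count_tail_from ?count_rates //= ?chain_rates_rates ?HSl.
- by rewrite !count_cat /= count_tail_from ?count_rates //= eqxx HSl.
have Hnet : net (spF m) (Reaction (kat m l) [:: spF m; spS m l] [:: spV m l]) = -1.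
  by rewrite /net /= eqxx.
rewrite (big_rrate1 _ Hr1) Hnet mulN1r opprK.
by rewrite (@indicator_cat2l _ (kat m l :: kat m (L m) :: chain_rates n)) // /monoS;
  perm_by_counts.
Qed.

Lemma coef_top_monoV R : all is_rate R ->
  coef (nderiv N L (2 * (n - m + 1)) (spS n (L n))) (monoV ++ R) =
  - ((perm_eq (kbt m l :: kat m (L m) :: chain_rates n) R)%:R +
     (perm_eq (kct m l :: kat m (L m) :: chain_rates n) R)%:R).
Proof.
move=> HR; have HT := mweight_monoV HR.
have Hr1 : Reaction (kbt m l) [:: spV m l] [:: spF m; spS m l] \in reactions N L.
  by apply: (@reactions_mj_sub _ _ m l); rewrite ?inE ?eqxx ?orbT //; lia.
have Hr2 : Reaction (kct m l) [:: spV m l] [:: spF m; spS m l.-1] \in reactions N L.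
  by apply: (@reactions_mj_sub _ _ m l); rewrite ?inE ?eqxx ?orbT //; lia.
rewrite (coef_nderiv_top HT) (dual_deriv_F HT (X := spV m l) (K := [:: kbt m l; kct m l]));
  [| exact: chain_rates_rates | by [] | | | exact: notin_reactants_V_ml]; last first.
- by rewrite /= count_cat count_tail_from ?count_rates //= ?chain_rates_rates.
- by rewrite !count_cat /= count_tail_from ?count_rates //= eqxx.
have Hnet1 : net (spF m) (Reaction (kbt m l) [:: spV m l] [:: spF m; spS m l]) = 1.
  by rewrite /net /= eqxx.
have Hnet2 : net (spF m) (Reaction (kct m l) [:: spV m l] [:: spF m; spS m l.-1]) = 1.
  by rewrite /net /= eqxx.
rewrite (big_rrate2 _ Hr1 Hr2) // Hnet1 Hnet2 !mul1r.
rewrite (@indicator_cat2l _ (kbt m l :: kat m (L m) :: chain_rates n)); last first.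
  by rewrite /monoV; perm_by_counts.
by rewrite (@indicator_cat2l _ (kct m l :: kat m (L m) :: chain_rates n)) // /monoV;
  perm_by_counts.
Qed.

End Weight.

Theorem mainTheorem19 (N : nat) (L : nat -> nat)
  (hN : (1 <= N)%N) (hL : forall i, (1 <= i <= N)%N -> (1 <= L i)%N)
  (m n l : nat) (hm : (1 <= m)%N) (hmn : (m < n)%N) (hnN : (n <= N)%N)
  (hl1 : (1 <= l)%N) (hl2 : (l <= L m - 1)%N) :
  let tail := [seq spS i (L i - 1) | i <- iota m.+1 (n - m)] in
  let Ms := [:: spS m l; spF m; spS m (L m)] ++ tail in
  let Mv := [:: spV m l; spS m (L m)] ++ tail in
  let Ktail := kat m (L m) :: flatten [seq [:: kc i (L i); ka i (L i)] | i <- iota m.+1 (n - m)] in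
  let top := (2 * (n - m + 1))%N in
  (forall k, (1 <= k < top)%N ->
     conc_coef_zero (nderiv N L k (spS n (L n))) Ms /\
     conc_coef_zero (nderiv N L k (spS n (L n))) Mv) /\
  (exists2 sgn : int, (sgn == 1) || (sgn == -1) &
     conc_coef_eq (nderiv N L top (spS n (L n))) Ms sgn [:: kat m l :: Ktail]) /\
  (exists2 sgn : int, (sgn == 1) || (sgn == -1) &
     conc_coef_eq (nderiv N L top (spS n (L n))) Mv sgn
       [:: kbt m l :: Ktail; kct m l :: Ktail]).
Proof.
move=> tail Ms Mv Ktail top.
split; [|split].
- move=> k /andP[_ Hk]; split=> R HR.
    by apply: (coef_nderiv_below (m := m) (l := l)) => //; apply: (mweight_monoS hL).
  by apply: (coef_nderiv_below (m := m) (l := l)) => //; apply: (mweight_monoV hL).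
- exists 1 => // R HR.
  by rewrite big_seq1 mul1r coef_top_monoS.
- exists (-1) => // R HR.
  by rewrite big_cons big_seq1 mulN1r coef_top_monoV.
Qed.
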